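(* Let $\mathcal X\subseteq\mathbb R^n$, $\bm c\in\mathbb R^n$, $\varepsilon\in(0,1)$, scenarios $\bm\xi^1,\dots,\bm\xi^N$ with probabilities $p_i\ge0$, $\sum_ip_i=1$, and $g(\bm x,\bm\xi)=\max_{j\in[J]}g_j(\bm x,\bm\xi)$. Let $\bm x^*$ be an optimal solution of $$v^*=\min_{\bm x\in\mathcal X}\Big\{\bm c^\top\bm x:\ \sum_{i=1}^Np_i\mathbb I[g(\bm x,\bm\xi^i)\le0]\ge1-\varepsilon\Big\},$$ and define $I^*=\{i\in[N]: g(\bm x^*,\bm\xi^i)\le0\}$. Suppose either (A) $\sum_{i\in[N]:\,g(\bm x^*,\bm\xi^i)<0}p_i>1-\varepsilon$; or (B) $\mathcal X$ is convex, $g(\cdot,\bm\xi^i)$ is convex for all $i\in I^*$, and there exists $\bar I\subseteq I^*$ such that for each $i\in\bar I$ there is $\bm x^i\in\mathcal X$ with $g(\bm x^i,\bm\xi^{i'})\le0$ for all $i'\in I^*$ and $g(\bm x^i,\bm\xi^i)<0$, and $\sum_{i\in\bar I}p_i>1-\varepsilon$. Then $$v^*=\inf\big\{v^{\mathrm{CVaR}}(\bm\alpha):\ \alpha_i=1,\ i\in[N]\setminus I^*,\ \ \alpha_i\ge1,\ i\in I^*\big\}.$$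
   Context: $\mathbb I[\cdot]$ is the indicator function. For $\bm\alpha\ge\bm e$ (all-ones vector), $v^{\mathrm{CVaR}}(\bm\alpha)=\min_{\bm x\in\mathcal X,\beta\le0,\bm s\ge\bm0}\{\bm c^\top\bm x:\ \varepsilon\beta+\sum_ip_is_i\le0,\ s_i+\beta\ge\alpha_ig(\bm x,\bm\xi^i),\ i\in[N]\}$, with value $+\infty$ if infeasible. *)

From HB Require Import structures.
From mathcomp Require Import all_boot all_order all_algebra.
From mathcomp Require Import all_classical all_reals.
From mathcomp Require Import ereal.
Set Implicit Arguments. Unset Strict Implicit. Unset Printing Implicit Defensive.
Import Order.TTheory GRing.Theory Num.Theory.
Local Open Scope ring_scope.
Local Open Scope classical_set_scope.

Section Defs.
Variable R : realType.

Definition dotp (n : nat) (c x : 'rV[R]_n) : R := \sum_(k < n) c 0 k * x 0 k.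

Definition convex_set (n : nat) (X : set 'rV[R]_n) : Prop :=
  forall x y t, X x -> X y -> 0 <= t <= 1 -> X ((1 - t) *: x + t *: y).

Definition convex_fun (n : nat) (f : 'rV[R]_n -> R) : Prop :=
  forall x y t, 0 <= t <= 1 ->
    f ((1 - t) *: x + t *: y) <= (1 - t) * f x + t * f y.

Definition gmax (n J : nat) (T : Type) (hJ : (0 < J)%N)
  (gj : 'I_J -> 'rV[R]_n -> T -> R) (x : 'rV[R]_n) (xi : T) : R :=
  \big[Num.max/gj (Ordinal hJ) x xi]_(j < J) gj j x xi.

Definition cc_feasible (n N : nat) (T : Type) (X : set 'rV[R]_n)
  (eps : R) (p : 'I_N -> R) (xi : 'I_N -> T) (g : 'rV[R]_n -> T -> R)
  (x : 'rV[R]_n) : Prop :=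
  X x /\ 1 - eps <= \sum_(i < N) p i * ((g x (xi i) <= 0)%R : bool)%:R.

(* v^CVaR(alpha); ereal_inf of the empty set is +oo *)
Definition vCVaR (n N : nat) (T : Type) (X : set 'rV[R]_n) (c : 'rV[R]_n)
  (eps : R) (p : 'I_N -> R) (xi : 'I_N -> T) (g : 'rV[R]_n -> T -> R)
  (alpha : 'I_N -> R) : \bar R :=
  ereal_inf [set (dotp c x)%:E | x in
    [set x | X x /\ exists (beta : R) (s : 'I_N -> R),
       [/\ beta <= 0, (forall i, 0 <= s i),
           eps * beta + \sum_(i < N) p i * s i <= 0 &
           (forall i, alpha i * g x (xi i) <= s i + beta)]]].

End Defs.

From HB Require Import structures.
From mathcomp Require Import all_boot all_order all_algebra.
From mathcomp Require Import all_classical all_reals.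
From mathcomp Require Import ereal.
From mathcomp Require Import ring lra.
Set Implicit Arguments. Unset Strict Implicit. Unset Printing Implicit Defensive.
Import Order.TTheory GRing.Theory Num.Theory.
Local Open Scope ring_scope.
Local Open Scope classical_set_scope.

(** Every CVaR-feasible point with [alpha >= 1] is chance-constrained feasible,
  which gives [v* <= inf v^CVaR].  Conversely, a point [x] that satisfies the
  constraints strictly on a set of scenarios of probability [> 1 - eps] is
  CVaR-feasible for suitable [alpha] (large on that set), so [inf v^CVaR <= c x].
  Under (A) this applies to [x*] itself.  Under (B), convex combinations of the
  points [x^i] give one point [y] strictly feasible on all of [Ibar], and by
  convexity so is every point of the segment ]x*, y]; letting it tend to [x*]
  gives [inf v^CVaR <= c x*]. *)

Lemma dotp_convex_comb (R : realType) (n : nat) (c x y : 'rV[R]_n) (l : R) :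
  dotp c ((1 - l) *: x + l *: y) = (1 - l) * dotp c x + l * dotp c y.
Proof.
rewrite /dotp !mulr_sumr -big_split; apply: eq_bigr => k _; rewrite !mxE /=; ring.
Qed.

Lemma convex_comb_lt0 (R : realType) (n : nat) (f : 'rV[R]_n -> R) x y (l : R) :
  convex_fun f -> 0 < l <= 1 -> f x <= 0 -> f y < 0 -> f ((1 - l) *: x + l *: y) < 0.
Proof.
move=> cf /andP[l0 l1] fx fy; have l01 : 0 <= l <= 1 by rewrite ltW.
by apply: le_lt_trans (cf x y l l01) _; nra.
Qed.

Lemma exists_common_strict_point (R : realType) (n : nat) (K : eqType)
  (X : set 'rV[R]_n) (f : K -> 'rV[R]_n -> R) (I : pred K) x0 :
  convex_set X -> (forall i, I i -> convex_fun (f i)) ->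
  X x0 -> (forall i, I i -> f i x0 <= 0) ->
  forall s : seq K, {subset s <= I} ->
  (forall i, i \in s ->
     exists z, [/\ X z, (forall i', I i' -> f i' z <= 0) & f i z < 0]) ->
  exists y, [/\ X y, (forall i', I i' -> f i' y <= 0) & (forall i, i \in s -> f i y < 0)].
Proof.
move=> cX cf X0 f0; elim => [|a s IH] sI hz; first by exists x0; split.
have sub_s : {subset s <= a :: s} := @mem_behead _ (a :: s).
have [y [Xy fy ys]] := IH (fun i si => sI i (sub_s i si))
                           (fun i si => hz i (sub_s i si)).
have [z [Xz fz za]] := hz a (mem_head _ _).
have half01 : 0 <= (2^-1 : R) <= 1 by apply/andP; split; lra.
have mid i : I i -> f i ((1 - 2^-1) *: y + 2^-1 *: z) <= (f i y + f i z) / 2.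
  by move=> Ii; have := cf i Ii y z _ half01; lra.
exists ((1 - 2^-1) *: y + 2^-1 *: z); split; first exact: cX.
  by move=> i Ii; have := mid i Ii; have := fy i Ii; have := fz i Ii; lra.
move=> i; rewrite inE => /orP[/eqP -> | si].
  by have Ia := sI a (mem_head _ _); have := mid a Ia; have := fy a Ia; lra.
have Ii := sI i (sub_s i si).
by have := mid i Ii; have := ys i si; have := fz i Ii; lra.
Qed.

Lemma le_EFin_segment (R : realType) (L : \bar R) (a D : R) :
  (forall l : R, 0 < l <= 1 -> (L <= (a + l * D)%:E)%E) -> (L <= a%:E)%E.
Proof.
have l01 : 0 < (1 : R) <= 1 by rewrite ltr01 lexx.
case: L => [r| |] hL; [|by have := hL 1 l01 | by rewrite leNye].
rewrite lee_fin; have [D0|D0] := leP D 0.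
  by have := hL 1 l01; rewrite lee_fin; lra.
apply/ler_addgt0Pr => e e0; set l := Num.min 1 (e / D).
have l0 : 0 < l by rewrite lt_min ltr01 divr_gt0.
have l1 : l <= 1 by rewrite ge_min lexx.
have lD : l * D <= e by rewrite -ler_pdivlMr // ge_min lexx orbT.
have : 0 < l <= 1 by rewrite l0 l1.
by move=> /hL; rewrite lee_fin; lra.
Qed.

Section CVaRApproximation.
Variables (R : realType) (N : nat) (p : 'I_N -> R).
Hypotheses (hp0 : forall i, 0 <= p i) (hp1 : \sum_(i < N) p i = 1).

Lemma prob_le0_complement (v : 'I_N -> R) :
  \sum_(i < N) p i * ((v i <= 0)%R : bool)%:R = 1 - \sum_(i < N) p i * ((0 < v i)%R : bool)%:R.
Proof.
transitivity (\sum_(i < N) p i - \sum_(i < N) p i * ((0 < v i)%R : bool)%:R).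
  rewrite -sumrB; apply: eq_bigr => i _.
  by rewrite ltNge; case: (v i <= 0); rewrite /= ?mulr1 ?mulr0 ?subr0 ?subrr.
by rewrite hp1.
Qed.

Lemma cvar_violation_prob_le (eps : R) (alpha v s : 'I_N -> R) (beta : R) :
  0 <= eps -> (forall i, 1 <= alpha i) -> beta <= 0 -> (forall i, 0 <= s i) ->
  eps * beta + \sum_(i < N) p i * s i <= 0 ->
  (forall i, alpha i * v i <= s i + beta) ->
  \sum_(i < N) p i * ((0 < v i)%R : bool)%:R <= eps.
Proof.
move=> eps0 ha hb hs hsum hc; set Q := \sum_(i < N) _.
have viol i : 0 < v i -> - beta < s i.
  move=> vi; have := hc i; have : 0 < alpha i * v i.
    by apply: mulr_gt0 => //; apply: lt_le_trans (ha i).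
  lra.
have ps0 : 0 <= \sum_(i < N) p i * s i by apply: sumr_ge0 => i _; exact: mulr_ge0.
have [bneg|b0] := ltP beta 0.
  have : - beta * Q <= \sum_(i < N) p i * s i.
    rewrite /Q mulr_sumr; apply: ler_sum => i _.
    case: ltP => vi /=; last by rewrite !mulr0; exact: mulr_ge0.
    by rewrite mulr1 mulrC ler_wpM2l // ltW // viol.
  by move=> h; rewrite -(ler_pM2l (_ : 0 < - beta)) ?oppr_gt0 //; lra.
have beta0 : beta = 0 by apply/eqP; rewrite eq_le hb b0.
rewrite beta0 oppr0 in viol; rewrite beta0 in hsum.
have ps_eq0 : \sum_(i < N) p i * s i = 0 by lra.
have /psumr_eq0P ps_i0 := ps_eq0; rewrite /Q big1 // => i _.
case: ltP => vi /=; last by rewrite mulr0.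
have /eqP := ps_i0 (fun i _ => mulr_ge0 (hp0 i) (hs i)) i isT.
rewrite mulf_eq0 => /orP[/eqP -> | /eqP si]; first by rewrite mul0r.
by have := viol i vi; rewrite si ltxx.
Qed.

Variables (n : nat) (T : Type) (X : set 'rV[R]_n) (c : 'rV[R]_n) (eps : R).
Variables (xi : 'I_N -> T) (g : 'rV[R]_n -> T -> R).

Lemma cc_feasible_of_cvar (alpha : 'I_N -> R) x beta (s : 'I_N -> R) :
  0 <= eps -> (forall i, 1 <= alpha i) -> X x -> beta <= 0 -> (forall i, 0 <= s i) ->
  eps * beta + \sum_(i < N) p i * s i <= 0 ->
  (forall i, alpha i * g x (xi i) <= s i + beta) -> cc_feasible X eps p xi g x.
Proof.
move=> eps0 ha Xx hb hs hsum hc; split => //; rewrite prob_le0_complement.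
by have := cvar_violation_prob_le eps0 ha hb hs hsum hc; lra.
Qed.

(** With [t = A / d], [A = sum_(i notin P) p_i max(g_i, 0)] and [d = eps - sum_(i notin P) p_i > 0],
  the choice [beta = -t], [s_i = 0] on [P], [s_i = max(g_i, 0) + t] off [P] makes
  the budget constraint tight, and [alpha_i = max(1, -t / g_i)] on [P] absorbs
  [beta] there since [g_i < 0]. *)
Lemma vCVaR_le_dotp_strict (P : pred 'I_N) x :
  X x -> (forall i, P i -> g x (xi i) < 0) -> 1 - eps < \sum_(i < N | P i) p i ->
  exists alpha : 'I_N -> R, (forall i, 1 <= alpha i /\ (~~ P i -> alpha i = 1)) /\
    (vCVaR X c eps p xi g alpha <= (dotp c x)%:E)%E.
Proof.
move=> Xx g_lt0 P_big; set gp := fun i => Num.max (g x (xi i)) 0.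
have gp0 i : 0 <= gp i by rewrite le_max lexx orbT.
set A := \sum_(i < N | ~~ P i) p i * gp i.
set d := eps - \sum_(i < N | ~~ P i) p i.
have d0 : 0 < d by move: hp1 P_big; rewrite /d (bigID P) /=; lra.
have A0 : 0 <= A by apply: sumr_ge0 => i _; exact: mulr_ge0.
set t := A / d; have t0 : 0 <= t by rewrite divr_ge0 // ltW.
exists (fun i => if P i then Num.max 1 (- t / g x (xi i)) else 1); split.
  by move=> i; case: (P i) => //=; split => //; rewrite le_max lexx.
apply: ereal_inf_lbound; exists x => //; split => //.
exists (- t), (fun i => if P i then 0 else gp i + t); split.
- by rewrite oppr_le0.
- by move=> i; case: (P i) => //; rewrite addr_ge0.
- rewrite (bigID P) /= big1 => [|i ->]; last by rewrite mulr0.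
  rewrite add0r (eq_bigr (fun i => p i * gp i + t * p i)) => [|i /negbTE ->]; last first.
    by rewrite mulrDr [t * _]mulrC.
  rewrite big_split /= -mulr_sumr -/A.
  have : t * d = A by rewrite divfK // gt_eqF.
  rewrite /d; lra.
- move=> i; case Pi: (P i); last by rewrite mul1r addrK le_max lexx.
  rewrite add0r; have gi := g_lt0 i Pi.
  apply: le_trans (_ : - t / g x (xi i) * g x (xi i) <= _).
    by rewrite ler_nM2r // le_max lexx orbT.
  by rewrite divfK // lt_eqF.
Qed.

Definition cvar_inf (I : pred 'I_N) : \bar R :=
  ereal_inf [set vCVaR X c eps p xi g alpha | alpha in
    [set alpha : 'I_N -> R | forall i, (I i -> 1 <= alpha i) /\ (~ I i -> alpha i = 1)]].

Lemma cc_opt_le_cvar_inf (I : pred 'I_N) xstar :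
  0 <= eps -> (forall x, cc_feasible X eps p xi g x -> dotp c xstar <= dotp c x) ->
  ((dotp c xstar)%:E <= cvar_inf I)%E.
Proof.
move=> eps0 hopt; apply: le_ereal_inf_tmp => _ [alpha ha <-].
apply: le_ereal_inf_tmp => _ [x [Xx [beta [s [hb hs hsum hc]]]] <-].
have ha1 i : 1 <= alpha i.
  by have [Ii|/negP nIi] := boolP (I i); [exact: (ha i).1 Ii | rewrite (ha i).2].
by rewrite lee_fin; apply/hopt/(cc_feasible_of_cvar eps0 ha1 Xx hb hs hsum hc).
Qed.

Lemma cvar_inf_le_dotp_strict (I P : pred 'I_N) x :
  {subset P <= I} -> X x -> (forall i, P i -> g x (xi i) < 0) ->
  1 - eps < \sum_(i < N | P i) p i -> (cvar_inf I <= (dotp c x)%:E)%E.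
Proof.
move=> PI Xx g_lt0 P_big; have [alpha [ha hv]] := vCVaR_le_dotp_strict Xx g_lt0 P_big.
apply: le_trans hv; apply: ereal_inf_lbound; exists alpha => // i.
split=> [_|nIi]; first by case: (ha i).
by apply: (ha i).2; apply/negP => /PI.
Qed.

End CVaRApproximation.

Theorem corollary3 (R : realType) (n N J : nat) (T : Type)
  (X : set 'rV[R]_n) (c : 'rV[R]_n) (eps : R) (heps : 0 < eps < 1)
  (xi : 'I_N -> T) (p : 'I_N -> R) (hp0 : forall i, 0 <= p i)
  (hp1 : \sum_(i < N) p i = 1)
  (hJ : (0 < J)%N) (gj : 'I_J -> 'rV[R]_n -> T -> R)
  (xstar : 'rV[R]_n)
  (hxfeas : cc_feasible X eps p xi (gmax hJ gj) xstar)
  (hxopt : forall x, cc_feasible X eps p xi (gmax hJ gj) x ->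
             dotp c xstar <= dotp c x) :
  let g := gmax hJ gj in
  let Istar := fun i : 'I_N => g xstar (xi i) <= 0 in
  (1 - eps < \sum_(i < N | g xstar (xi i) < 0) p i) \/
  (convex_set X /\
   (forall i, Istar i -> convex_fun (fun x => g x (xi i))) /\
   exists Ibar : {set 'I_N},
     (forall i, i \in Ibar -> Istar i) /\
     (forall i, i \in Ibar -> exists xi_ : 'rV[R]_n,
        [/\ X xi_, (forall i', Istar i' -> g xi_ (xi i') <= 0) &
            g xi_ (xi i) < 0]) /\
     1 - eps < \sum_(i in Ibar) p i) ->
  (dotp c xstar)%:E =
    ereal_inf [set vCVaR X c eps p xi g alpha | alpha in
      [set alpha : 'I_N -> R | forall i,
         (Istar i -> 1 <= alpha i) /\ (~ Istar i -> alpha i = 1)]].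
Proof.
move=> g Istar H; have eps0 : 0 < eps by case/andP: heps.
have Xs : X xstar by case: hxfeas.
apply: le_anti; rewrite (cc_opt_le_cvar_inf hp0 hp1 Istar (ltW eps0) hxopt) /=.
case: H => [hA | [cX [cf [Ibar [hIb [hpts hP]]]]]].
  by apply: (cvar_inf_le_dotp_strict hp0 hp1 c (P := fun i => g xstar (xi i) < 0)) => // i /ltW.
have [y [Xy fy ys]] : exists y, [/\ X y, forall i, Istar i -> g y (xi i) <= 0 &
                                   forall i, i \in enum Ibar -> g y (xi i) < 0].
  apply: (exists_common_strict_point (f := fun i x => g x (xi i)) cX cf Xs) => // [i|i];
    rewrite mem_enum; [exact: hIb | exact: hpts].
apply: (le_EFin_segment (D := dotp c y - dotp c xstar)) => l l01.
have [l0 l1] : 0 < l /\ l <= 1 by apply/andP.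
have -> : dotp c xstar + l * (dotp c y - dotp c xstar) =
          dotp c ((1 - l) *: xstar + l *: y) by rewrite dotp_convex_comb; ring.
apply: (cvar_inf_le_dotp_strict hp0 hp1 c (P := mem Ibar)) => [i /hIb | | i Ii |] //.
  by apply: cX => //; rewrite ltW.
by apply: convex_comb_lt0 (cf i (hIb i Ii)) l01 (hIb i Ii) (ys i _); rewrite mem_enum.
Qed.
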